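(* Let $X=\{x_1,\dots,x_t\}$ with $x_1<x_2<\dots<x_t$, and let $x=(x_{i_1},\dots,x_{i_m})$ be a time series with values in $X$ satisfying $\mathrm{set}(x)=X$. Let $Y=\{y_1,\dots,y_t\}$ with $y_1<y_2<\dots<y_t$, and let $y=(y_{i_1},\dots,y_{i_m})$ (with the same index sequence $i_1,\dots,i_m$) be a time series with values in $Y$ satisfying $\mathrm{set}(y)=Y$. Then for every $\ell\in\mathbb{N}$, $D_{(x,\ell)}=D_{(y,\ell)}$.
   Context: A time series of complexity $m$ is a vector in $\mathbb{R}^m$; $\mathrm{set}(x)$ is the set of entries of $x$, and $\mathrm{rank}_x(z)$ is the rank of $z\in\mathrm{set}(x)$ in $\mathrm{set}(x)$ (ordered increasingly). For $x\in\mathbb{R}^m$ and $y\in\mathbb{R}^\ell$, a traversal is a sequence of index pairs $(i,j)\in[m]\times[\ell]$ starting at $(1,1)$, ending at $(m,\ell)$, in which each pair $(i,j)$ is followed by one of $(i,j+1)$, $(i+1,j)$, $(i+1,j+1)$; $x_i$ and $y_j$ are matched if $(i,j)$ occurs in it. For a traversal $M$ of $x$ with a time series of complexity $\ell$, the traversal sectors are $S^{(x,M)}_j=\{x_i: x_i \text{ matched with the } j\text{-th vertex by } M\}$, $j\in[\ell]$, and the $\ell$-profile of $(x,M)$ is $\big((\mathrm{rank}_x(\min S^{(x,M)}_j),\mathrm{rank}_x(\max S^{(x,M)}_j))\big)_{j=1}^{\ell}$. $D_{(x,\ell)}$ is the set of all $\ell$-profiles of $(x,M)$ over all such traversals $M$.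 *)

From mathcomp Require Import all_boot all_order all_algebra.
Set Implicit Arguments. Unset Strict Implicit. Unset Printing Implicit Defensive.
Import Order.TTheory GRing.Theory Num.Theory.
Local Open Scope ring_scope.

(* Time series of complexity m over a real-closed/real field R: 'rV[R]_m is
   avoided; we use functions 'I_m -> R.  Indices are 0-based internally. *)

Section TS.
Variable R : realFieldType.

Definition ts_set (m : nat) (x : 'I_m -> R) : seq R := undup [seq x i | i <- enum 'I_m].

Definition ts_rank (m : nat) (x : 'I_m -> R) (z : R) : nat :=
  (count (fun w => w < z) (ts_set x)).+1.

Definition step (p q : nat * nat) : bool :=
  [|| q == (p.1, p.2.+1), q == (p.1.+1, p.2) | q == (p.1.+1, p.2.+1)].

Definition is_traversal (m l : nat) (M : seq (nat * nat)) : bool :=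
  [&& (0 < m)%N, (0 < l)%N, head (0%N, 0%N) M == (0%N, 0%N) , M != [::],
      last (0%N, 0%N) M == (m.-1, l.-1),
      sorted step M & all (fun p => (p.1 < m) && (p.2 < l))%N M].

Definition sector (m : nat) (x : 'I_m -> R) (M : seq (nat * nat)) (j : nat) : seq R :=
  [seq x i | i <- enum 'I_m & ((nat_of_ord i, j) \in M)].

Definition seq_min (s : seq R) : R := foldr Num.min (head 0 s) s.
Definition seq_max (s : seq R) : R := foldr Num.max (head 0 s) s.

Definition profile (m : nat) (x : 'I_m -> R) (l : nat) (M : seq (nat * nat))
  : seq (nat * nat) :=
  [seq (ts_rank x (seq_min (sector x M j)), ts_rank x (seq_max (sector x M j)))
  | j <- iota 0 l].

Definition D_set (m : nat) (x : 'I_m -> R) (l : nat) : seq (nat * nat) -> Prop :=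
  fun P => exists M, is_traversal m l M /\ P = profile x l M.

End TS.

(* A traversal matches every vertex with at least one position of the series,
   so each sector is a nonempty block of values F (idx k).  For strictly
   increasing F, the minimum and maximum of such a block are F applied to the
   minimum and maximum index, and, since every index is attained, the rank of
   F a in set(F o idx) is determined by a alone.  Hence the profile of
   F o idx under a traversal does not depend on F. *)

From mathcomp Require Import all_boot all_order all_algebra.
From mathcomp Require Import zify.
From Stdlib Require Import FunctionalExtensionality PropExtensionality.
Import Order.TTheory GRing.Theory Num.Theory.
Local Open Scope ring_scope.
Set Implicit Arguments. Unset Strict Implicit.

(* A step raises the second coordinate by at most one, so no vertex is skipped. *)
Lemma step_path_cover p s : path step p s -> forall j,
  (p.2 <= j <= (last p s).2)%N -> exists2 q, q \in p :: s & q.2 = j.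
Proof.
elim: s p => [|a s IH] p /=.
  move=> _ j /andP[pj jp]; exists p; first exact: mem_head.
  by apply/eqP; rewrite eqn_leq pj jp.
move=> /andP[pa a_path] j /andP[pj jlast].
have [ltpj|lejp] := ltnP p.2 j; last first.
  by exists p; [rewrite mem_head | apply/eqP; rewrite eqn_leq pj lejp].
have aj : (a.2 <= j)%N by move: pa; rewrite /step => /or3P[]/eqP-> /=; lia.
have [|q qin qj] := IH a a_path j; first by rewrite aj.
by exists q => //; rewrite inE qin orbT.
Qed.

Lemma traversal_matches_vertex m l M j : is_traversal m l M -> (j < l)%N ->
  exists i : 'I_m, (nat_of_ord i, j) \in M.
Proof.
case/and5P=> _ _ hd M_nil /and3P[lst srt bounded] jl.
case: M hd M_nil lst srt bounded => [|p s] //= /eqP hp _ /eqP hl srt bounded.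
have [q qin qj] : exists2 q, q \in p :: s & q.2 = j.
  by apply: (step_path_cover srt); rewrite hl hp /=; lia.
have /andP[q1 _] := allP (bounded : all _ (p :: s)) q qin.
by exists (Ordinal q1); rewrite /= -qj -surjective_pairing.
Qed.

Lemma foldr_map_morph (A B : Type) (f : A -> B) (opA : A -> A -> A)
    (opB : B -> B -> B) :
  {morph f : x y / opA x y >-> opB x y} ->
  forall c s, foldr opB (f c) (map f s) = f (foldr opA c s).
Proof. by move=> fM c; elim=> //= a s ->; rewrite fM. Qed.

Section IncreasingImage.
Variables (d d' : Order.disp_t) (T : orderType d) (T' : orderType d').
Variable f : T -> T'.
Hypothesis f_incr : {homo f : x y / (x <= y)%O}.

Lemma nondecreasing_min : {morph f : x y / Order.min x y >-> Order.min x y}.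
Proof.
move=> x y; case: (leP x y) => [xy | /ltW yx].
  by rewrite !min_l ?f_incr.
by rewrite !min_r ?f_incr.
Qed.

Lemma nondecreasing_max : {morph f : x y / Order.max x y >-> Order.max x y}.
Proof.
move=> x y; case: (leP x y) => [xy | /ltW yx].
  by rewrite !max_r ?f_incr.
by rewrite !max_l ?f_incr.
Qed.

End IncreasingImage.

Section IndexSeries.
Variables (R : realFieldType) (d : Order.disp_t) (T : finOrderType d) (m : nat).
Variable idx : 'I_m -> T.
Hypothesis idx_surj : forall a : T, exists k : 'I_m, idx k = a.

Section StrictlyIncreasing.
Variable F : T -> R.
Hypothesis F_incr : {homo F : a b / (a < b)%O >-> a < b}.

Lemma seq_min_map a s :
  seq_min (map F (a :: s)) = F (foldr Order.min a (a :: s)).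
Proof.
rewrite /seq_min [head _ _]/=.
exact/foldr_map_morph/nondecreasing_min/ltW_homo.
Qed.

Lemma seq_max_map a s :
  seq_max (map F (a :: s)) = F (foldr Order.max a (a :: s)).
Proof.
rewrite /seq_max [head _ _]/=.
exact/foldr_map_morph/nondecreasing_max/ltW_homo.
Qed.

Lemma ts_set_comp : perm_eq (ts_set (fun k => F (idx k))) (map F (enum T)).
Proof.
apply: uniq_perm; first exact: undup_uniq.
  by rewrite map_inj_uniq ?enum_uniq //; exact/inc_inj/le_mono.
move=> w; rewrite mem_undup; apply/mapP/mapP => [[k _ ->]|[a _ ->]].
  by exists (idx k); rewrite ?mem_enum.
by have [k <-] := idx_surj a; exists k; rewrite ?mem_enum.
Qed.

Lemma ts_rank_comp a :
  ts_rank (fun k => F (idx k)) (F a) = (count (fun b => b < a)%O (enum T)).+1.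
Proof.
rewrite /ts_rank (permP ts_set_comp) count_map.
by congr S; apply: eq_count => b /=; rewrite (leW_mono (le_mono F_incr)).
Qed.

End StrictlyIncreasing.

Lemma profile_comp_incr (F G : T -> R) l M :
    {homo F : a b / (a < b)%O >-> a < b} ->
    {homo G : a b / (a < b)%O >-> a < b} ->
  is_traversal m l M ->
  profile (fun k => F (idx k)) l M = profile (fun k => G (idx k)) l M.
Proof.
move=> F_incr G_incr trav; apply/eq_in_map => j.
rewrite mem_iota add0n => /andP[_ jl].
set S := [seq idx i | i <- enum 'I_m & (nat_of_ord i, j) \in M].
have sector_comp H : sector (fun k => H (idx k)) M j = map H S.
  by rewrite /sector /S map_comp.
have [i0 i0j] := traversal_matches_vertex trav jl.
have : idx i0 \in S by apply: map_f; rewrite mem_filter i0j mem_enum.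
rewrite !sector_comp {sector_comp}; case: S => [|a s] // _.
by rewrite !seq_min_map // !seq_max_map // !ts_rank_comp.
Qed.

End IndexSeries.

Theorem lemma4p5 (R : realFieldType) (t m : nat)
  (X Y : 'I_t -> R)
  (hX : forall a b : 'I_t, (a < b)%N -> X a < X b)
  (hY : forall a b : 'I_t, (a < b)%N -> Y a < Y b)
  (idx : 'I_m -> 'I_t)
  (hsurj : forall a : 'I_t, exists k : 'I_m, idx k = a)
  (l : nat) :
  D_set (fun k => X (idx k)) l = D_set (fun k => Y (idx k)) l.
Proof.
have same_profile M : is_traversal m l M ->
    profile (fun k => X (idx k)) l M = profile (fun k => Y (idx k)) l M.
  by apply: profile_comp_incr.
apply: functional_extensionality => P; apply: propositional_extensionality.
by split=> -[M [trav ->]]; exists M; split; rewrite ?same_profile.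
Qed.
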